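(* Let $R$ be a unital $K$-algebra, $J$ a locally f.d.ss ideal of $R$, and $T$ a finite dimensional semisimple subalgebra of $R$ with identity element $p := 1_T$ such that $R = T \oplus J$ as $K$-vector spaces. Then the following are equivalent: (a) $R$ is locally f.d.ss; (b) $pRp$ is locally f.d.ss; (c) for every idempotent $f \in pJp$ there is an idempotent $e \in pJp$ such that $f \in eJe$ and $e$ commutes with every element of $T$.
   Context: $K$ is a field. All algebras are associative $K$-algebras; ideals are two-sided ring ideals that are also $K$-subspaces. A $K$-algebra $R$ is locally f.d.ss if every finite subset of $R$ is contained in a subalgebra of $R$ that is a finite dimensional semisimple $K$-algebra. The identity $1_T$ of $T$ need not equal $1_R$. *)

From HB Require Import structures.
From mathcomp Require Import all_boot all_order all_algebra.
Set Implicit Arguments. Unset Strict Implicit. Unset Printing Implicit Defensive.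
Import GRing.Theory.
Local Open Scope ring_scope.

Section AlgDefs.
Variables (K : fieldType) (R : algType K).
Implicit Types (S A I : R -> Prop).

Definition subset_of S A : Prop := forall x, S x -> A x.

Definition subspace S : Prop :=
  S 0 /\ (forall x y, S x -> S y -> S (x + y)) /\ (forall (k : K) x, S x -> S (k *: x)).

(* (not necessarily unital) K-subalgebra: subspace closed under product *)
Definition subalgebra S : Prop :=
  subspace S /\ (forall x y, S x -> S y -> S (x * y)).

Definition ideal I : Prop :=
  subspace I /\ (forall r x, I x -> I (r * x)) /\ (forall r x, I x -> I (x * r)).

Definition fin_dim S : Prop :=
  exists b : seq R, (forall x, x \in b -> S x) /\
    forall x, S x -> exists c : 'I_(size b) -> K, x = \sum_(i < size b) c i *: b`_i.

Definition ideal_in S I : Prop :=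
  subset_of I S /\ subspace I /\
  (forall t x, S t -> I x -> I (t * x)) /\ (forall t x, S t -> I x -> I (x * t)).

Definition nilpotent_set I : Prop :=
  exists n : nat, (0 < n)%N /\
    forall s : seq R, size s = n -> (forall x, x \in s -> I x) -> \prod_(x <- s) x = 0.

(* finite dimensional semisimple subalgebra: finite dimensional and
   with no nonzero nilpotent ideal (zero radical) *)
Definition fdss S : Prop :=
  subalgebra S /\ fin_dim S /\
  forall I, ideal_in S I -> nilpotent_set I -> forall x, I x -> x = 0.

Definition locally_fdss A : Prop :=
  forall s : seq R, (forall x, x \in s -> A x) ->
    exists S, subset_of S A /\ fdss S /\ (forall x, x \in s -> S x).

Definition is_identity_of S (p : R) : Prop :=
  S p /\ forall t, S t -> p * t = t /\ t * p = t.

Definition corner (a : R) A : R -> Prop := fun y => exists x, A x /\ y = a * x * a.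

Definition idem_elt (e : R) : Prop := e * e = e.

Definition direct_sum_decomp (T J : R -> Prop) : Prop :=
  (forall r : R, exists t j, T t /\ J j /\ r = t + j) /\
  (forall x, T x -> J x -> x = 0).

End AlgDefs.

(* A subalgebra is f.d. semisimple iff it is finite dimensional and semiprime
   (x S x = 0 forces x = 0): the ideal generated by such an x has zero cube, and a
   nilpotent ideal of a semiprime algebra vanishes.  By Brauer's lemma every ideal of a
   f.d. semiprime algebra has an identity element, which is central.
   (a) -> (b): corners e S e of f.d.ss algebras are f.d.ss.
   (b) -> (c): put f, p and a basis of T into a f.d.ss subalgebra S of pRp; if c is
   the identity of the ideal S :&: J of S, then e := c p works.
   (c) -> (a): every element of R is t + j; local units of J and idempotent polynomials
   in them yield an idempotent E of J commuting with T and acting as the identity on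
   finitely many given j; then T + E S E is f.d.ss for a suitable f.d.ss S in J. *)

From HB Require Import structures.
From mathcomp Require Import all_boot all_order all_algebra.
From mathcomp Require Import ring.
From Stdlib Require Import ClassicalEpsilon Classical.
Import GRing.Theory.
Local Open Scope ring_scope.

Set Implicit Arguments.
Unset Strict Implicit.
Unset Printing Implicit Defensive.

Section Subspaces.
Variables (K : fieldType) (R : algType K).
Implicit Types (S A : R -> Prop) (x y : R) (b : seq R).

Lemma subspace0 S : subspace S -> S 0.
Proof. by case. Qed.

Lemma subspaceD S x y : subspace S -> S x -> S y -> S (x + y).
Proof. by case=> _ [+ _]; apply. Qed.

Lemma subspaceZ S (k : K) x : subspace S -> S x -> S (k *: x).
Proof. by case=> _ [_]; apply. Qed.

Lemma subspaceN S x : subspace S -> S x -> S (- x).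
Proof. by move=> hS hx; rewrite -scaleN1r; apply: subspaceZ. Qed.

Lemma subspaceB S x y : subspace S -> S x -> S y -> S (x - y).
Proof. by move=> hS hx hy; apply: subspaceD => //; apply: subspaceN. Qed.

Lemma subspace_sum S (I : Type) (r : seq I) (P : pred I) (F : I -> R) :
  subspace S -> (forall i, P i -> S (F i)) -> S (\sum_(i <- r | P i) F i).
Proof.
by move=> hS; apply: (big_ind S); [apply: subspace0|move=> ? ?; apply: subspaceD].
Qed.

Lemma subspace_ker (f : R -> R) :
  {morph f : u v / u + v} -> (forall (k : K) u, f (k *: u) = k *: f u) ->
  subspace (fun x => f x = 0).
Proof.
move=> fD fZ; have f0 : f 0 = 0 by apply: (addIr (f 0)); rewrite -fD !add0r.
split=> //; split=> [x y hx hy|k x hx]; first by rewrite fD hx hy addr0.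
by rewrite fZ hx scaler0.
Qed.

Lemma subalgebraM S x y : subalgebra S -> S x -> S y -> S (x * y).
Proof. by case=> _; apply. Qed.

Lemma subalgebra_subspace S : subalgebra S -> subspace S.
Proof. by case. Qed.

Definition in_span b x := exists c : nat -> K, x = \sum_(0 <= i < size b) c i *: b`_i.

Lemma fin_dimP S :
  fin_dim S <-> exists b, (forall x, x \in b -> S x) /\ forall x, S x -> in_span b x.
Proof.
split=> -[b [hb hS]]; exists b; split=> // x /hS [c ->].
  exists (fun i => oapp c 0 (insub i)); rewrite big_mkord.
  by apply: eq_bigr => i _; rewrite valK.
by exists (fun i => c i); rewrite big_mkord.
Qed.

Lemma in_span_sub S b x : subspace S -> (forall y, y \in b -> S y) -> in_span b x -> S x.
Proof.
move=> hS hb [c ->]; apply: subspace_sum => // i _; apply: subspaceZ => //.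
have [hi|hi] := ltnP i (size b); first by apply: hb; rewrite mem_nth.
by rewrite nth_default //; apply: subspace0.
Qed.

Lemma in_span_map (f : R -> R) b x :
  {morph f : u v / u + v} -> (forall (k : K) u, f (k *: u) = k *: f u) ->
  in_span b x -> in_span (map f b) (f x).
Proof.
move=> fD fZ [c ->]; have f0 : f 0 = 0 by apply: (addIr (f 0)); rewrite -fD !add0r.
exists c; rewrite size_map (big_morph f fD f0); apply: eq_bigr => i _.
rewrite fZ; have [hi|hi] := ltnP i (size b); first by rewrite (nth_map 0).
by rewrite !nth_default ?size_map // f0.
Qed.

Lemma in_span_cat b1 b2 x y : in_span b1 x -> in_span b2 y -> in_span (b1 ++ b2) (x + y).
Proof.
case=> c1 -> [c2 ->].
exists (fun i => if (i < size b1)%N then c1 i else c2 (i - size b1)%N).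
rewrite size_cat [RHS](@big_cat_nat _ _ _ (size b1)) ?leq_addr //=; congr (_ + _).
  by rewrite !big_nat; apply: eq_bigr => i /andP[_ hi]; rewrite hi nth_cat hi.
rewrite -{1}(add0n (size b1)) big_addn addKn !big_nat; apply: eq_bigr => i _.
by rewrite ltnNge leq_addl /= addnK nth_cat ltnNge leq_addl /= addnK.
Qed.

End Subspaces.

Section Semiprime.
Variables (K : fieldType) (R : algType K).
Implicit Types (S N : R -> Prop) (x y : R).

Definition semiprime S := forall x, S x -> (forall s, S s -> x * s * x = 0) -> x = 0.

Definition with1 S a := S a \/ a = 1.

Lemma with1M S a b : subalgebra S -> with1 S a -> with1 S b -> with1 S (a * b).
Proof.
move=> hS [ha|->] [hb|->]; rewrite ?mulr1 ?mul1r; [left; exact: subalgebraM|by left..|by right].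
Qed.

Lemma with1Ml S a y : subalgebra S -> with1 S a -> S y -> S (a * y).
Proof. by move=> hS [ha|->] hy; rewrite ?mul1r //; apply: subalgebraM. Qed.

Lemma with1Mr S a y : subalgebra S -> with1 S a -> S y -> S (y * a).
Proof. by move=> hS [ha|->] hy; rewrite ?mulr1 //; apply: subalgebraM. Qed.

Definition ideal_gen S x : R -> Prop := fun y =>
  exists l : seq (K * R * R), (forall t, t \in l -> with1 S t.1.2 /\ with1 S t.2) /\
    y = \sum_(t <- l) t.1.1 *: (t.1.2 * x * t.2).

Lemma ideal_genW S x (P : R -> Prop) : subspace P ->
  (forall a b, with1 S a -> with1 S b -> P (a * x * b)) ->
  forall y, ideal_gen S x y -> P y.
Proof.
move=> hP haxb y [l [hl ->]]; rewrite big_seq; apply: subspace_sum => // t ht.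
by have [ha hb] := hl t ht; apply: subspaceZ => //; apply: haxb.
Qed.

Lemma ideal_gen_self S x : ideal_gen S x x.
Proof.
exists [:: (1, 1, 1)]; rewrite big_seq1 scale1r mulr1 mul1r; split=> // t.
by rewrite inE => /eqP -> /=; split; right.
Qed.

Lemma ideal_gen_ideal_in S x : subalgebra S -> S x -> ideal_in S (ideal_gen S x).
Proof.
move=> hS hx; split.
  apply: ideal_genW; first exact: subalgebra_subspace.
  by move=> a b ha hb; apply: (with1Mr hS hb); apply: (with1Ml hS ha).
split; first split.
- by exists [::]; rewrite big_nil.
- split=> [y1 y2 [l1 [h1 ->]] [l2 [h2 ->]]|k y [l [hl ->]]].
    exists (l1 ++ l2); rewrite big_cat; split=> // t.
    by rewrite mem_cat => /orP[]; [apply: h1|apply: h2].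
  exists (map (fun t => (k * t.1.1, t.1.2, t.2)) l); rewrite big_map scaler_sumr.
  split; first by move=> t /mapP [u hu ->] /=; apply: hl.
  by apply: eq_bigr => t _; rewrite scalerA.
split=> t y ht [l [hl ->]].
  exists (map (fun u => (u.1.1, t * u.1.2, u.2)) l); rewrite big_map mulr_sumr.
  split; last by apply: eq_bigr => u _; rewrite -scalerAr !mulrA.
  move=> u /mapP [v hv ->] /=; have [ha hb] := hl v hv.
  by split=> //; left; apply: with1Mr.
exists (map (fun u => (u.1.1, u.1.2, u.2 * t)) l); rewrite big_map mulr_suml.
split; last by apply: eq_bigr => u _; rewrite -scalerAl !mulrA.
move=> u /mapP [v hv ->] /=; have [ha hb] := hl v hv.
by split=> //; left; apply: with1Ml.
Qed.

Lemma subspace_mul0 (u w : R) : subspace (fun v => u * v * w = 0).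
Proof.
apply: subspace_ker => [v1 v2|k v]; first by rewrite mulrDr mulrDl.
by rewrite -scalerAr -scalerAl.
Qed.

(* Each a1 x b1 a2 x b2 a3 x b3 has the factor x c1 x c2 x with c1, c2 in S or 1. *)
Lemma ideal_gen_cube S x : subalgebra S -> S x -> (forall s, S s -> x * s * x = 0) ->
  forall y1 y2 y3, ideal_gen S x y1 -> ideal_gen S x y2 -> ideal_gen S x y3 ->
  y1 * y2 * y3 = 0.
Proof.
move=> hS hx hxSx.
have xcxcx c1 c2 : with1 S c1 -> with1 S c2 -> x * c1 * x * c2 * x = 0.
  case=> [h1|->]; first by rewrite hxSx ?mul0r.
  case=> [h2|->]; last by rewrite !mulr1 hxSx.
  by rewrite mulr1 -!mulrA [x * (c2 * x)]mulrA hxSx ?mulr0.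
move=> y1 y2 y3 hy1 hy2 hy3.
suff: y1 * y2 * y3 * 1 = 0 by rewrite mulr1.
apply: (ideal_genW (subspace_mul0 _ _) _ hy3) => a3 b3 ha3 hb3; rewrite mulr1.
apply: (ideal_genW (subspace_mul0 _ _) _ hy2) => a2 b2 ha2 hb2.
rewrite -mulrA -[y1]mul1r; apply: (ideal_genW (subspace_mul0 _ _) _ hy1) => a1 b1 ha1 hb1.
have -> : 1 * (a1 * x * b1) * (a2 * x * b2 * (a3 * x * b3)) =
          a1 * (x * (b1 * a2) * x * (b2 * a3) * x) * b3 by rewrite !mulrA mul1r.
by rewrite xcxcx ?mulr0 ?mul0r //; apply: with1M.
Qed.

Lemma fdss_semiprime S : fdss S -> semiprime S.
Proof.
move=> [hS [_ hN]] x hx hxSx; apply: (hN (ideal_gen S x)); last exact: ideal_gen_self.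
  exact: ideal_gen_ideal_in.
exists 3; split=> // -[|y1 [|y2 [|y3 []]]] //= _ hs.
rewrite !big_cons big_nil mulr1 mulrA.
by apply: (ideal_gen_cube hS hx) => //; apply: hs; rewrite !inE eqxx ?orbT.
Qed.

Lemma ideal_in_prod S N (s : seq R) : ideal_in S N -> s != [::] ->
  (forall x, x \in s -> N x) -> N (\prod_(x <- s) x).
Proof.
move=> [hNS [_ [_ hNr]]]; elim: s => [//|x [|y s] IH] _ hs.
  by rewrite big_seq1; apply: hs; rewrite inE.
rewrite big_cons; apply: hNr; last by apply: hs; rewrite mem_head.
by apply: hNS; apply: IH => // u hu; apply: hs; rewrite inE hu orbT.
Qed.

Definition prod_vanish N k :=
  forall s : seq R, size s = k -> (forall x, x \in s -> N x) -> \prod_(x <- s) x = 0.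

(* For a product z of k elements of N, each z s z is a product of k + 1 of them. *)
Lemma semiprime_prod_vanish S N k : semiprime S -> ideal_in S N -> (0 < k)%N ->
  prod_vanish N k.+1 -> prod_vanish N k.
Proof.
move=> hsp hN k_gt0 hk s hs hsN; have [hNS [_ [hNl _]]] := hN.
have s_nil : s != [::] by apply: contraTneq k_gt0 => s0; rewrite -hs s0.
apply: hsp => [|t ht]; first by apply: hNS; apply: (ideal_in_prod hN).
have := hk (s ++ [:: t * \prod_(x <- s) x]).
rewrite big_cat big_seq1 size_cat hs addn1 -mulrA; apply=> // u.
rewrite mem_cat inE => /orP [/hsN //|/eqP ->].
by apply: hNl => //; apply: (ideal_in_prod hN).
Qed.

Lemma semiprime_fdss S : subalgebra S -> fin_dim S -> semiprime S -> fdss S.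
Proof.
move=> hS hfd hsp; split=> //; split=> // N hN [m [m_gt0 hm]] x hx.
have prod_vanish_sub j : (j < m)%N -> prod_vanish N (m - j).
  elim: j => [|j IH] hj; first by rewrite subn0.
  apply: (semiprime_prod_vanish hsp hN); first by rewrite subn_gt0.
  by rewrite subnS prednK ?subn_gt0; [apply: IH|]; apply: ltnW.
have m_sub : (m - m.-1 = 1)%N by case: (m) m_gt0 => // m' _; rewrite subSnn.
have := prod_vanish_sub m.-1; rewrite m_sub ltn_predL => /(_ m_gt0 [:: x] erefl).
by rewrite big_seq1; apply=> u; rewrite inE => /eqP ->.
Qed.

Lemma fdssP S : fdss S <-> [/\ subalgebra S, fin_dim S & semiprime S].
Proof.
split=> [hS|[*]]; last exact: semiprime_fdss.
by have [? [? _]] := hS; split=> //; apply: fdss_semiprime.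
Qed.

End Semiprime.

Definition propb (P : Prop) : bool := if excluded_middle_informative P then true else false.

Lemma propbP (P : Prop) : reflect P (propb P).
Proof. by rewrite /propb; case: excluded_middle_informative => h; constructor. Qed.

Section RowDimension.
Variables (K : fieldType) (n : nat).
Implicit Types (P Q : 'rV[K]_n -> Prop).

Definition rv_subspace P :=
  P 0 /\ (forall u v, P u -> P v -> P (u + v)) /\ (forall (k : K) u, P u -> P (k *: u)).

Definition rank_attained P (r : nat) :=
  exists k (M : 'M[K]_(k, n)), (forall i, P (row i M)) /\ \rank M = r.

(* The dimension of a subspace P of K^n: the largest rank of a matrix with rows in P. *)
Definition rdim P : nat := \max_(r < n.+1 | propb (rank_attained P r)) r.

Lemma rv_subspace_mul P k (M : 'M[K]_(k, n)) (u : 'rV_k) :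
  rv_subspace P -> (forall i, P (row i M)) -> P (u *m M).
Proof.
case=> P0 [PD PZ] hM; rewrite mulmx_sum_row.
by apply: (big_ind P) => // i _; apply: PZ.
Qed.

Lemma rdim_ltn P Q c : rv_subspace P -> (forall v, P v -> Q v) -> Q c -> ~ P c ->
  (rdim P < rdim Q)%N.
Proof.
move=> hP hPQ hc hPc; rewrite /rdim.
pose A (r : 'I_n.+1) := propb (rank_attained P r).
have A_gt0 : (0 < #|A|)%N.
  apply/card_gt0P; exists ord0; rewrite /A /in_mem /=; apply/propbP.
  by exists 0%N, 0; split; [case|rewrite mxrank0].
have [i0 + ->] := @eq_bigmax_cond _ A (fun r : 'I_n.+1 => nat_of_ord r) A_gt0.
rewrite /A /in_mem /= => /propbP [k [M [hM <-]]].
have McN : ~~ (c <= M)%MS.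
  by apply/negP => /submxP [D cM]; apply: hPc; rewrite cM; apply: rv_subspace_mul.
have rank_lt : (\rank M < \rank (col_mx M c))%N.
  rewrite -(addsmxE M c).1; have : (M < M + c)%MS.
    rewrite ltmxE addsmxSl; apply: contra McN; exact: submx_trans (addsmxSr M c).
  by rewrite ltmxErank => /andP [].
have rank_le : (\rank (col_mx M c) < n.+1)%N by rewrite ltnS rank_leq_col.
apply: (leq_trans rank_lt).
apply: (@leq_bigmax_cond _ _ (fun r : 'I_n.+1 => nat_of_ord r) (Ordinal rank_le)).
apply/propbP; exists (k + 1)%N, (col_mx M c); split=> // i.
by rewrite -(splitK i); case: (split i) => j /=; [rewrite rowKu; apply: hPQ|rewrite rowKd row_id].
Qed.

End RowDimension.

Section SpanDimension.
Variables (K : fieldType) (R : algType K).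
Implicit Types (Z : R -> Prop) (b : seq R).

Definition coord_sum b (c : 'rV[K]_(size b)) : R := \sum_(i < size b) c 0 i *: b`_i.

Definition span_dim b Z := rdim (fun c : 'rV[K]_(size b) => Z (coord_sum c)).

Lemma rv_subspace_coord b Z : subspace Z -> rv_subspace (fun c => Z (coord_sum (b:=b) c)).
Proof.
move=> hZ; split.
  by rewrite /coord_sum big1 => [|i _]; [apply: subspace0|rewrite mxE scale0r].
split=> [u v hu hv|k u hu].
  have -> : coord_sum (u + v) = coord_sum u + coord_sum v.
    by rewrite /coord_sum -big_split; apply: eq_bigr => i _; rewrite mxE scalerDl.
  exact: subspaceD.
have -> : coord_sum (k *: u) = k *: coord_sum u.
  by rewrite /coord_sum scaler_sumr; apply: eq_bigr => i _; rewrite mxE scalerA.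
exact: subspaceZ.
Qed.

Lemma span_dim_ltn b Z' Z z : subspace Z' -> (forall v, Z' v -> Z v) -> Z z -> ~ Z' z ->
  in_span b z -> (span_dim b Z' < span_dim b Z)%N.
Proof.
move=> hZ' hZ'Z hz hZ'z [c ec].
have coord_z : coord_sum (\row_(i < size b) c i) = z.
  by rewrite ec /coord_sum big_mkord; apply: eq_bigr => i _; rewrite mxE.
by apply: (rdim_ltn (c := \row_(i < size b) c i)); rewrite ?coord_z //;
  [apply: rv_subspace_coord|move=> v; apply: hZ'Z].
Qed.

End SpanDimension.

Section MinimalRightIdeals.
Variables (K : fieldType) (R : algType K).
Implicit Types (S Z : R -> Prop) (x y z : R).

Definition right_ideal_in S Z :=
  (forall z, Z z -> S z) /\ subspace Z /\ (forall z s, Z z -> S s -> Z (z * s)).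

Definition nonzero_set Z := exists z, Z z /\ z <> 0.

Definition minimal_right_ideal_in S Z :=
  [/\ right_ideal_in S Z, nonzero_set Z &
      forall Z', right_ideal_in S Z' -> nonzero_set Z' -> (forall z, Z' z -> Z z) ->
        forall z, Z z -> Z' z].

Lemma right_ideal_lmul S Z m : subalgebra S -> S m -> right_ideal_in S Z ->
  right_ideal_in S (fun y => exists w, Z w /\ y = m * w).
Proof.
move=> hS hm [hZS [hZ hZr]]; split.
  by move=> y [w [hw ->]]; apply: subalgebraM => //; apply: hZS.
split; last by move=> y t [w [hw ->]] ht; exists (w * t); rewrite mulrA; split=> //; apply: hZr.
split; first by exists 0; rewrite mulr0; split=> //; apply: subspace0.
split=> [y1 y2 [w1 [h1 ->]] [w2 [h2 ->]]|k y [w [hw ->]]].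
  by exists (w1 + w2); rewrite mulrDr; split=> //; apply: subspaceD.
by exists (k *: w); rewrite scalerAr; split=> //; apply: subspaceZ.
Qed.

Lemma right_ideal_ann S Z m : right_ideal_in S Z ->
  right_ideal_in S (fun y => Z y /\ m * y = 0).
Proof.
move=> [hZS [hZ hZr]]; split; first by move=> y [/hZS].
split; last by move=> y t [hy my0] ht; split; [apply: hZr|rewrite mulrA my0 mul0r].
split; first by split; [apply: subspace0|rewrite mulr0].
split=> [y1 y2 [h1 e1] [h2 e2]|k y [hy e]].
  by split; [apply: subspaceD|rewrite mulrDr e1 e2 addr0].
by split; [apply: subspaceZ|rewrite -scalerAr e scaler0].
Qed.

Lemma minimal_right_ideal_exists S Z : fin_dim S -> right_ideal_in S Z -> nonzero_set Z ->
  exists2 Z0, minimal_right_ideal_in S Z0 & forall z, Z0 z -> Z z.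
Proof.
move=> /fin_dimP [b [_ hspan]]; move: {2}(span_dim b Z).+1 (ltnSn (span_dim b Z)) => k.
elim: k Z => [//|k IH] Z hk hZ hZnz.
have [[Z' [hZ' hZ'nz hZ'Z [z [hz hZ'z]]]]|hmin] := classic (exists Z',
    [/\ right_ideal_in S Z', nonzero_set Z', forall z, Z' z -> Z z & exists z, Z z /\ ~ Z' z]).
  have lt_dim : (span_dim b Z' < span_dim b Z)%N.
    apply: (span_dim_ltn (z := z)) => //; first by case: hZ' => _ [].
    by apply/hspan; case: hZ => + _; apply.
  have [Z0 hZ0min hZ0Z'] := IH Z' (leq_trans lt_dim hk) hZ' hZ'nz.
  by exists Z0 => // z' /hZ0Z'/hZ'Z.
exists Z => //; split=> // Z' hZ' hZ'nz hZ'Z z hz; apply: NNPP => hZ'z.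
by apply: hmin; exists Z'; split=> //; exists z.
Qed.

(* Brauer's lemma: for z in Z with z s z <> 0, the right ideal (z s) Z is all of Z,
   so z s = z s e for some e in Z, and e is idempotent because the annihilator of z s
   in Z misses z. *)
Lemma minimal_right_ideal_idempotent S Z : subalgebra S -> semiprime S ->
  minimal_right_ideal_in S Z -> exists e, [/\ Z e, e * e = e & e <> 0].
Proof.
move=> hS hsp [hZ [z [hz z_neq0]] hmin]; have [hZS [hZsub hZr]] := hZ.
have [s [hs zsz_neq0]] : exists s, S s /\ z * s * z <> 0.
  apply: NNPP => h; apply/z_neq0/hsp; first exact: hZS.
  by move=> s hs; apply: NNPP => h'; apply: h; exists s.
pose m := z * s; have hm : Z m by apply: hZr.
have [e [he me]] : exists w, Z w /\ m = m * w.
  apply: (hmin _ (right_ideal_lmul hS (hZS m hm) hZ)) => // [|y [w [hw ->]]].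
    by exists (m * z); split=> //; exists z.
  by apply: hZr => //; apply: hZS.
have hee : Z (e * e - e) by apply: subspaceB => //; apply: hZr => //; apply: hZS.
exists e; split=> //; last by move=> e0; apply: zsz_neq0; rewrite -/m me e0 mulr0 mul0r.
apply/eqP; rewrite -subr_eq0; apply/eqP; apply: NNPP => hee_neq0; apply: zsz_neq0.
have [_ mz0] : Z z /\ m * z = 0.
  apply: (hmin _ (right_ideal_ann m hZ)) => // [|y [] //].
  by exists (e * e - e); split=> //; split=> //; rewrite mulrBr mulrA -!me subrr.
exact: mz0.
Qed.

Lemma right_ideal_idempotent S Z : subalgebra S -> fin_dim S -> semiprime S ->
  right_ideal_in S Z -> nonzero_set Z -> exists e, [/\ Z e, e * e = e & e <> 0].
Proof.
move=> hS hfd hsp hZ hZnz; have [Z0 hZ0 hZ0Z] := minimal_right_ideal_exists hfd hZ hZnz.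
have [e [he ee e0]] := minimal_right_ideal_idempotent hS hsp hZ0.
by exists e; split=> //; apply: hZ0Z.
Qed.

End MinimalRightIdeals.

Section IdealUnits.
Variables (K : fieldType) (R : algType K).
Implicit Types (S I : R -> Prop) (x y : R).

Lemma ideal_in_right_ideal S I : ideal_in S I -> right_ideal_in S I.
Proof. by case=> hIS [hI [_ hIr]]; do 2![split=> //] => x s hx hs; apply: hIr. Qed.

Lemma idempotent_extend (v w : R) : v * v = v -> w * w = w -> v * w = 0 ->
  let v' := v + w - w * v in [/\ v' * v' = v', v' * v = v, v' * w = w & v * v' = v].
Proof.
move=> vv ww vw v'.
have v'v : v' * v = v by rewrite /v' mulrBl mulrDl -mulrA vv addrK.
have v'w : v' * w = w by rewrite /v' mulrBl mulrDl vw ww -mulrA vw mulr0 add0r subr0.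
split=> //; last by rewrite /v' mulrBr mulrDr vw mulrA vw mul0r vv addr0 subr0.
by rewrite {2}/v' mulrBr mulrDr mulrA v'w v'v.
Qed.

(* An idempotent v of I that is not a left identity of I has a nonzero annihilator
   {x in I | v x = 0}; an idempotent w in it enlarges v to v + w - w v, whose
   annihilator is strictly smaller. *)
Lemma ideal_left_unit S I : subalgebra S -> fin_dim S -> semiprime S -> ideal_in S I ->
  exists v, [/\ I v, v * v = v & forall x, I x -> v * x = x].
Proof.
move=> hS hfd hsp hI; have [hIS [hIsub [hIl hIr]]] := hI.
have /fin_dimP [b [_ hspan]] := hfd.
pose ann v x := I x /\ v * x = 0.
suff : forall k v, (span_dim b (ann v) < k)%N -> I v -> v * v = v ->
    exists v, [/\ I v, v * v = v & forall x, I x -> v * x = x].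
  by move=> /(_ _ 0 (ltnSn _)); apply; [apply: subspace0|rewrite mulr0].
elim=> [//|k IH] v hk hv vv.
have [[z [hz z_neq0]]|ann0] := classic (nonzero_set (ann v)); last first.
  exists v; split=> // x hx; apply/eqP; rewrite eq_sym -subr_eq0; apply/eqP.
  apply: NNPP => hx_neq; apply: ann0; exists (x - v * x); split=> //; split.
    by apply: subspaceB => //; apply: hIl => //; apply: hIS.
  by rewrite mulrBr mulrA vv subrr.
have [w [[hw vw] ww w_neq0]] := right_ideal_idempotent hS hfd hsp
  (right_ideal_ann v (ideal_in_right_ideal hI)) (ex_intro _ z (conj hz z_neq0)).
have [v'v' v'v v'w vv'] := idempotent_extend vv ww vw.
set v' := v + w - w * v in v'v' v'v v'w vv'.
have hv' : I v' by apply: subspaceB; [|apply: subspaceD|apply: hIr => //; apply: hIS].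
rewrite ltnS in hk; apply: (IH v') => //; apply: leq_trans hk.
apply: (span_dim_ltn (z := w)) => //.
- by case: (right_ideal_ann v' (ideal_in_right_ideal hI)) => _ [].
- by move=> x [hx v'x]; split=> //; rewrite -vv' -mulrA v'x mulr0.
- by move=> [_ v'w0]; apply: w_neq0; rewrite -v'w.
- exact/hspan/hIS.
Qed.

(* A left identity v of I is also a right identity: y := x - x v satisfies y v = 0,
   hence y S y = 0. *)
Lemma ideal_unit S I : subalgebra S -> fin_dim S -> semiprime S -> ideal_in S I ->
  exists2 c, I c & forall x, I x -> c * x = x /\ x * c = x.
Proof.
move=> hS hfd hsp hI; have [hIS [hIsub [hIl hIr]]] := hI.
have [v [hv vv vI]] := ideal_left_unit hS hfd hsp hI.
exists v => // x hx; split; first exact: vI.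
pose y := x - x * v.
have hy : I y by apply: subspaceB => //; apply: hIr => //; apply: hIS.
have yv : y * v = 0 by rewrite /y mulrBl -mulrA vv subrr.
suff /eqP : y = 0 by rewrite subr_eq0 => /eqP <-.
apply: hsp; first exact: hIS.
by move=> s hs; rewrite -mulrA -(vI (s * y)) ?mulrA ?yv ?mul0r //; apply: hIl.
Qed.

Lemma ideal_unit_central S I c : ideal_in S I -> I c ->
  (forall x, I x -> c * x = x /\ x * c = x) -> forall s, S s -> c * s = s * c.
Proof.
move=> [hIS [hIsub [hIl hIr]]] hc cI s hs.
have cc : c * c = c by case: (cI c hc).
have hcs : I (c * s) by apply: hIr.
have hcsc : I (c * s * c) by apply: hIr => //; apply: hIS.
have cs_csc : c * s = c * s * c.
  have /cI [_] : I (c * s - c * s * c) by apply: subspaceB.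
  by rewrite mulrBl -(mulrA _ c c) cc subrr => /esym/eqP; rewrite subr_eq0 => /eqP.
have sc_csc : s * c = c * s * c.
  have /cI [] : I (s * c - c * s * c) by apply: subspaceB => //; apply: hIl.
  by rewrite mulrBr !mulrA cc subrr => /esym/eqP; rewrite subr_eq0 => /eqP.
by rewrite cs_csc sc_csc.
Qed.

End IdealUnits.

Section Corners.
Variables (K : fieldType) (R : algType K).
Implicit Types (S A J : R -> Prop) (x y : R).

Lemma corner_fix r A x : idem_elt r -> corner r A x -> r * x = x /\ x * r = x.
Proof. by move=> rr [a [_ ->]]; split; [rewrite !mulrA rr|rewrite -mulrA rr]. Qed.

Lemma cornerW r A x : idem_elt r -> A x -> r * x = x -> x * r = x -> corner r A x.
Proof. by move=> rr hx rx xr; exists x; rewrite rx xr. Qed.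

Lemma ideal_corner J r x : ideal J -> corner r J x -> J x.
Proof. by move=> [_ [hJl hJr]] [a [ha ->]]; apply/hJr/hJl. Qed.

Lemma corner_sub S e x : subalgebra S -> S e -> corner e S x -> S x.
Proof. by move=> hS he [a [ha ->]]; do 2!apply: subalgebraM => //. Qed.

Lemma corner_subalgebra S e : subalgebra S -> S e -> idem_elt e -> subalgebra (corner e S).
Proof.
move=> hS he ee; have hSsub := subalgebra_subspace hS.
split; first split.
- by exists 0; rewrite mulr0 mul0r; split=> //; apply: subspace0.
- split=> [x y [a [ha ->]] [c [hc ->]]|k x [a [ha ->]]].
    by exists (a + c); rewrite mulrDr mulrDl; split=> //; apply: subspaceD.
  by exists (k *: a); rewrite -scalerAr -scalerAl; split=> //; apply: subspaceZ.
- move=> x y [a [ha ->]] [c [hc ->]]; exists (a * e * c); split.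
    by do 2!apply: subalgebraM => //.
  by rewrite !mulrA -(mulrA (e * a) e e) ee.
Qed.

Lemma corner_fin_dim S e : fin_dim S -> fin_dim (corner e S).
Proof.
move=> /fin_dimP [b [hb hspan]]; apply/fin_dimP.
exists (map (fun z => e * z * e) b); split.
  by move=> x /mapP [y hy ->]; exists y; split=> //; apply: hb.
move=> x [a [ha ->]]; apply: in_span_map (hspan a ha) => [u v|k u].
  by rewrite mulrDr mulrDl.
by rewrite -scalerAr -scalerAl.
Qed.

Lemma corner_semiprime S e : subalgebra S -> S e -> idem_elt e -> semiprime S ->
  semiprime (corner e S).
Proof.
move=> hS he ee hsp x hx hxSx; apply: hsp => [|s hs]; first exact: corner_sub hx.
have [ex xe] := corner_fix ee hx.
have -> : x * s * x = x * (e * s * e) * x by rewrite -{1}xe -{2}ex !mulrA.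
by apply: hxSx; exists s.
Qed.

Lemma corner_fdss S e : fdss S -> S e -> idem_elt e -> fdss (corner e S).
Proof.
move=> /fdssP [hS hfd hsp] he ee; apply/fdssP; split.
- exact: corner_subalgebra.
- exact: corner_fin_dim.
- exact: corner_semiprime.
Qed.

Lemma locally_fdss_corner A p : subalgebra A -> A p -> idem_elt p ->
  locally_fdss A -> locally_fdss (corner p A).
Proof.
move=> hA hp pp hAloc s hs.
have [S [hSA [hS hSs]]] : exists S, subset_of S A /\ fdss S /\ (forall x, x \in p :: s -> S x).
  by apply: hAloc => x; rewrite inE => /orP [/eqP ->|/hs]; last exact: corner_sub.
exists (corner p S); split; [|split].
- by move=> x [z [hz ->]]; exists z; split=> //; apply: hSA.
- by apply: corner_fdss => //; apply: hSs; rewrite mem_head.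
- move=> x hx; have [px xp] := corner_fix pp (hs x hx).
  by apply: cornerW => //; apply: hSs; rewrite inE hx orbT.
Qed.

End Corners.

Section IdempotentPolynomial.
Variable K : fieldType.

(* W is 0 modulo the part of P * ('X - 1) prime to 'X - 1 and 1 modulo the rest. *)
Lemma idempotent_poly (P : {poly K}) : P != 0 -> root P 0 ->
  exists W Q : {poly K}, [/\ root W 0, W.[1] = 1 & W * W - W = Q * P].
Proof.
move=> P_neq0 P0; pose P1 := P * ('X - 1%:P).
have P1_neq0 : P1 != 0 by rewrite mulf_neq0 // polyXsubC_eq0.
have [m [q]] := multiplicity_XsubC P1 1; rewrite P1_neq0 /= => q1_neq0 P1E.
have m_gt0 : (0 < m)%N.
  case: m P1E => // /(congr1 (horner^~ 1)); rewrite expr0 mulr1 hornerM.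
  by rewrite hornerXsubC subrr mulr0 => /esym/rootP; rewrite (negbTE q1_neq0).
set Xm := ('X - 1%:P) ^+ m in P1E.
have q0 : q.[0] = 0.
  have /eqP := congr1 (horner^~ 0) P1E; rewrite !hornerM (rootP P0) mul0r eq_sym.
  rewrite /Xm horner_exp hornerXsubC sub0r mulf_eq0 expf_eq0 oppr_eq0 oner_eq0 andbF orbF.
  by move/eqP.
have /Bezout_coprimepP [[U1 U2] /=] : coprimep q Xm.
  by apply: coprimep_expr; rewrite coprimep_XsubC.
rewrite -size_poly_eq1 => /size_poly1P [c c_neq0 UE].
pose C := c^-1%:P; have CcE : C * c%:P = 1 by rewrite -polyCM mulVf.
pose W := C * U1 * q.
have W1E : W - 1 = - (C * U2 * Xm) by rewrite /W -CcE -UE; ring.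
exists W, (- (C * C * U1 * U2) * ('X - 1%:P)); split.
- by rewrite /root /W hornerM q0 mulr0.
- have : (W - 1).[1] = 0.
    by rewrite W1E hornerN hornerM /Xm horner_exp hornerXsubC subrr expr0n gtn_eqF // mulr0 oppr0.
  by rewrite !hornerE => /eqP; rewrite subr_eq0 => /eqP.
- have -> : W * W - W = W * (W - 1) by ring.
  rewrite W1E /W; have -> : C * U1 * q * - (C * U2 * Xm) = - (C * C * U1 * U2) * (q * Xm).
    by ring.
  by rewrite -P1E /P1; ring.
Qed.

End IdempotentPolynomial.

Section AnnihilatingPolynomials.
Variables (K : fieldType) (R : algType K).
Implicit Types (S : R -> Prop) (f y : R).

Lemma horner_alg_fixl f y (P : {poly K}) : f * y = y -> horner_alg f P * y = P.[1] *: y.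
Proof.
move=> fy; elim/poly_ind: P => [|P c IH]; first by rewrite rmorph0 mul0r horner0 scale0r.
rewrite rmorphD rmorphM /= horner_algX horner_algC mulrDl -mulrA fy IH.
by rewrite hornerMXaddC mulr1 scalerDl -scalerAl mul1r.
Qed.

Lemma horner_alg_fixr f y (P : {poly K}) : y * f = y -> y * horner_alg f P = P.[1] *: y.
Proof.
move=> yf; elim/poly_ind: P => [|P c IH]; first by rewrite rmorph0 mulr0 horner0 scale0r.
rewrite rmorphD rmorphM /= horner_algX horner_algC mulrDr mulrA IH -scalerAl yf.
by rewrite hornerMXaddC mulr1 scalerDl -scalerAr mulr1.
Qed.

(* e := W(f) for the polynomial W of idempotent_poly: W(0) = 0 puts e in f R and R f,
   and W(1) = 1 makes e act as the identity wherever f does. *)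
Lemma annihilated_idempotent f (P : {poly K}) : P != 0 -> root P 0 -> horner_alg f P = 0 ->
  exists e g, [/\ e * e = e, e = g * f, e = f * g &
    forall y, (f * y = y -> e * y = y) /\ (y * f = y -> y * e = y)].
Proof.
move=> P_neq0 P0 fP0; have [W [Q [W0 W1 WE]]] := idempotent_poly P_neq0 P0.
have [W' W'E] : exists W', W = W' * 'X.
  by have /factor_theorem [W' ->] := W0; exists W'; rewrite subr0.
have eE : horner_alg f W = horner_alg f W' * f by rewrite W'E rmorphM /= horner_algX.
exists (horner_alg f W), (horner_alg f W'); split=> //.
- apply/eqP; rewrite -subr_eq0; apply/eqP.
  by rewrite -rmorphM -rmorphB /= WE rmorphM /= fP0 mulr0.
- by rewrite eE -{2 3}(horner_algX f) -!rmorphM /= mulrC.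
- by move=> y; split=> [/horner_alg_fixl|/horner_alg_fixr] ->; rewrite W1 scale1r.
Qed.

(* The n + 1 powers f, ..., f ^+ n.+1 in the span of n vectors are linearly dependent. *)
Lemma annihilating_poly S f : subalgebra S -> fin_dim S -> S f ->
  exists P : {poly K}, [/\ P != 0, root P 0 & horner_alg f P = 0].
Proof.
move=> hS /fin_dimP [b [_ hspan]] hf; set n := size b.
have Sf_pow k : S (f ^+ k.+1).
  by elim: k => [|k IH]; rewrite ?expr1 // exprS; apply: subalgebraM.
have coef k : {c : nat -> K | f ^+ k.+1 = \sum_(0 <= i < n) c i *: b`_i}.
  exact/constructive_indefinite_description/hspan.
pose M := \matrix_(k < n.+1, i < n) sval (coef k) i.
have powE (k : 'I_n.+1) : f ^+ k.+1 = \sum_(i < n) M k i *: b`_i.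
  by rewrite (svalP (coef k)) big_mkord; apply: eq_bigr => i _; rewrite mxE.
have kerM_neq0 : kermx M != 0.
  rewrite kermx_eq0 /row_free; apply: contraTneq (rank_leq_col M) => ->.
  by rewrite ltnn.
have [v /sub_kermxP vM v_neq0] := rowV0Pn kerM_neq0.
exists (\sum_(k < n.+1) v 0 k *: 'X^(k.+1)); split.
- apply: contraNneq v_neq0 => P0; apply/eqP/rowP => k; rewrite !mxE.
  have := congr1 (fun P : {poly K} => P`_k.+1) P0; rewrite coef0 coef_sum => <-.
  rewrite (bigD1 k) //= big1 ?addr0 => [|j /negbTE jk].
    by rewrite coefZ coefXn eqxx mulr1.
  have kj : (k == j :> nat) = false by rewrite eq_sym; exact: jk.
  by rewrite coefZ coefXn eqSS kj mulr0.
- rewrite /root horner_sum; apply/eqP/big1 => k _.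
  by rewrite hornerZ hornerXn expr0n mulr0.
- rewrite rmorph_sum /=.
  under eq_bigr => k _ do rewrite linearZ /= rmorphXn /= horner_algX powE mulr_algl scaler_sumr.
  rewrite exchange_big /= big1 // => i _.
  under eq_bigr => k _ do rewrite scalerA.
  rewrite -scaler_suml.
  have -> : \sum_(k < n.+1) v 0 k * M k i = (v *m M) 0 i by rewrite mxE.
  by rewrite vM mxE scale0r.
Qed.

End AnnihilatingPolynomials.

Section SumSet.
Variables (K : fieldType) (R : algType K).
Implicit Types (A J T : R -> Prop).

Definition sum_set T A : R -> Prop := fun y => exists t a, [/\ T t, A a & y = t + a].

Lemma sum_set_l T A t : subspace A -> T t -> sum_set T A t.
Proof. by move=> hA ht; exists t, 0; rewrite addr0; split=> //; apply: subspace0. Qed.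

Lemma sum_set_r T A a : subspace T -> A a -> sum_set T A a.
Proof. by move=> hT ha; exists 0, a; rewrite add0r; split=> //; apply: subspace0. Qed.

Definition absorbs A T := forall t a, T t -> A a -> A (t * a) /\ A (a * t).

Lemma sum_set_subalgebra T A : subalgebra T -> subalgebra A -> absorbs A T ->
  subalgebra (sum_set T A).
Proof.
move=> hT hA hAT; have [hTsub hAsub] := (subalgebra_subspace hT, subalgebra_subspace hA).
split; first split.
- by exists 0, 0; rewrite addr0; split=> //; apply: subspace0.
- split=> [y1 y2 [t1 [a1 [h1 h1' ->]]] [t2 [a2 [h2 h2' ->]]]|k y [t [a [ht ha ->]]]].
    by exists (t1 + t2), (a1 + a2); rewrite addrACA; split=> //; apply: subspaceD.
  by exists (k *: t), (k *: a); rewrite scalerDr; split=> //; apply: subspaceZ.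
- move=> y1 y2 [t1 [a1 [h1 h1' ->]]] [t2 [a2 [h2 h2' ->]]].
  exists (t1 * t2), (t1 * a2 + (a1 * t2 + a1 * a2)); split.
  + exact: subalgebraM.
  + apply: (subspaceD hAsub); first exact: (hAT _ _ h1 h2').1.
    by apply: (subspaceD hAsub); [exact: (hAT _ _ h2 h1').2|apply: subalgebraM].
  + by rewrite mulrDl !mulrDr !addrA.
Qed.

Lemma sum_set_fin_dim T A : fin_dim T -> fin_dim A -> subspace T -> subspace A ->
  fin_dim (sum_set T A).
Proof.
move=> /fin_dimP [bT [hbT hT]] /fin_dimP [bA [hbA hA]] hTsub hAsub.
apply/fin_dimP; exists (bT ++ bA); split.
  by move=> x; rewrite mem_cat => /orP [/hbT|/hbA]; [apply: sum_set_l|apply: sum_set_r].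
by move=> y [t [a [ht ha ->]]]; apply: in_span_cat; [apply: hT|apply: hA].
Qed.

(* For y = t + a with y (T + A) y = 0, testing against t' in T gives t t' t in T and J, so t = 0;
   testing against A then gives a = 0. *)
Lemma sum_set_semiprime J T A : ideal J -> (forall x, T x -> J x -> x = 0) ->
  subalgebra T -> semiprime T -> subspace A -> semiprime A -> subset_of A J ->
  semiprime (sum_set T A).
Proof.
move=> hJ TJ0 hT hTsp hAsub hAsp hAJ y [t [a [ht ha ->]]] hy0.
have [hJsub [hJl hJr]] := hJ.
have t0 : t = 0.
  apply: hTsp => // t' ht'.
  have := hy0 t' (sum_set_l hAsub ht').
  have -> : (t + a) * t' * (t + a) = t * t' * t + (t * t' * a + a * t' * (t + a)).
    by rewrite !mulrDl mulrDr !addrA.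
  move=> /eqP; rewrite addr_eq0 => /eqP tt't; apply: TJ0.
    by apply: subalgebraM => //; apply: subalgebraM.
  rewrite tt't; apply: subspaceN => //.
  by apply: subspaceD => //; [apply: hJl; apply: hAJ|apply/hJr/hJr/hAJ].
rewrite t0 add0r; apply: hAsp => // a' ha'.
by have := hy0 a' (sum_set_r (subalgebra_subspace hT) ha'); rewrite t0 add0r.
Qed.

Lemma sum_set_fdss J T A : ideal J -> (forall x, T x -> J x -> x = 0) ->
  fdss T -> fdss A -> subset_of A J -> absorbs A T -> fdss (sum_set T A).
Proof.
move=> hJ TJ0 /fdssP [hT hTfd hTsp] /fdssP [hA hAfd hAsp] hAJ hAT; apply/fdssP; split.
- exact: sum_set_subalgebra.
- by apply: sum_set_fin_dim => //; apply: subalgebra_subspace.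
- by apply: (sum_set_semiprime hJ) => //; apply: subalgebra_subspace.
Qed.

End SumSet.

Section Corollary.
Variables (K : fieldType) (R : algType K) (J T : R -> Prop) (p : R).
Hypotheses (hJ : ideal J) (hJloc : locally_fdss J) (hT : fdss T) (hp : is_identity_of T p).
Implicit Types (S A : R -> Prop) (X : seq R) (x y : R).

Definition centralizing_idempotents := forall f, idem_elt f -> corner p J f ->
  exists e, [/\ idem_elt e, corner p J e, corner e J f & forall t, T t -> e * t = t * e].

Lemma identity_idem : idem_elt p.
Proof. by have [hTp /(_ p hTp) []] := hp. Qed.

Lemma fdss_centralizing_idempotent S f : fdss S -> S p -> (forall t, T t -> S t) ->
  S f -> corner p J f ->
  exists e, [/\ idem_elt e, corner p J e, corner e J f & forall t, T t -> e * t = t * e].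
Proof.
move=> /fdssP [hS hfd hsp] hSp hTS hSf hf; have pp := identity_idem.
have [pf fp] := corner_fix pp hf.
have hI : ideal_in S (fun x => S x /\ J x).
  have [hJsub [hJl hJr]] := hJ; have hSsub := subalgebra_subspace hS.
  split; first by move=> x [].
  split; first split.
  - by split; apply: subspace0.
  - by split=> [x y [? ?] [? ?]|k x [? ?]]; split; by [apply: subspaceD|apply: subspaceZ].
  by split=> t x ht [hx hJx]; split; by [apply: subalgebraM|apply: hJl|apply: hJr].
have [c [hSc hJc] cI] := ideal_unit hS hfd hsp hI.
have c_central := ideal_unit_central hI (conj hSc hJc) cI.
have cc : c * c = c by case: (cI c (conj hSc hJc)).
have pc : p * c = c * p by rewrite c_central.
exists (c * p); split.
- by rewrite /idem_elt mulrA -(mulrA c p c) pc mulrA cc -mulrA pp.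
- by exists c; rewrite pc -mulrA pp.
- have [cf fc] := cI f (conj hSf (ideal_corner hJ hf)).
  by exists f; split; [apply: ideal_corner hf|rewrite -(mulrA c p f) pf cf mulrA fc fp].
- move=> t ht; have [_ /(_ t ht) [pt tp]] := hp.
  by rewrite -mulrA pt c_central; [rewrite -pc mulrA tp|apply: hTS].
Qed.

Lemma corner_locally_fdss_centralizing :
  locally_fdss (corner p (fun _ : R => True)) -> centralizing_idempotents.
Proof.
move=> hloc f _ hf; have pp := identity_idem; have [_ hpT] := hp.
have /fdssP [_ /fin_dimP [tb [htb htbspan]] _] := hT.
have [S [_ [hS hSl]]] : exists S, subset_of S (corner p (fun _ : R => True)) /\ fdss S /\
    (forall x, x \in f :: p :: tb -> S x).
  apply: hloc => x; rewrite !inE => /or3P [/eqP ->|/eqP ->|/htb hx].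
  - by case: hf => j [_ ->]; exists j.
  - by exists p; rewrite !pp.
  - by have [px xp] := hpT x hx; exists x; rewrite px xp.
apply: (fdss_centralizing_idempotent hS) => //; last by apply: hSl; rewrite mem_head.
- by apply: hSl; rewrite !inE eqxx orbT.
- move=> t ht; apply: (in_span_sub (b := tb)) (htbspan t ht).
    by have /fdssP [/subalgebra_subspace] := hS.
  by move=> y hy; apply: hSl; rewrite !inE hy !orbT.
Qed.

Lemma corner_unit r g : J g -> idem_elt r ->
  exists e, [/\ idem_elt e, corner r J e &
    forall y, (g * y = y -> r * y = y -> e * y = y) /\ (y * g = y -> y * r = y -> y * e = y)].
Proof.
move=> hg rr; pose f := r * g * r.
have hf : J f by apply: (ideal_corner hJ); exists g.
have [S [_ [hS hSf]]] : exists S, subset_of S J /\ fdss S /\ (forall x, x \in [:: f] -> S x).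
  by apply: hJloc => x; rewrite inE => /eqP ->.
have /fdssP [hSa hfd _] := hS.
have [P [P_neq0 P0 fP0]] := annihilating_poly hSa hfd (hSf f (mem_head _ _)).
have [e [h [ee ehf efh efix]]] := annihilated_idempotent P_neq0 P0 fP0.
have rf : r * f = f by rewrite /f !mulrA rr.
have fr : f * r = f by rewrite /f -mulrA rr.
exists e; split=> //.
  apply: cornerW => //; first by rewrite ehf; have [_ [hJl _]] := hJ; apply: hJl.
    by rewrite efh mulrA rf.
  by rewrite ehf -mulrA fr.
move=> y; split=> gy ry.
  by apply: (efix y).1; rewrite /f -!mulrA ry gy ry.
by apply: (efix y).2; rewrite /f !mulrA ry gy ry.
Qed.

Lemma local_unit X : (forall x, x \in X -> J x) ->
  exists2 g, J g & forall x, x \in X -> g * x = x /\ x * g = x.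
Proof.
move=> hXJ; have [S [hSJ [/fdssP [hS hfd hsp] hXS]]] := hJloc hXJ.
have hSS : ideal_in S S.
  by split=> //; split; [apply: subalgebra_subspace|split=> *; apply: subalgebraM].
have [g hg gS] := ideal_unit hS hfd hsp hSS.
by exists g; [apply: hSJ|move=> x /hXS; apply: gS].
Qed.

Lemma corner_fixing_unit r X : idem_elt r -> (forall x, x \in X -> J x) ->
  exists e, [/\ idem_elt e, corner r J e &
    forall x, x \in X -> e * (r * x) = r * x /\ (x * r) * e = x * r].
Proof.
move=> rr hXJ; have [_ [hJl hJr]] := hJ.
have [g hg gX] : exists2 g, J g &
    forall x, x \in map (fun x => r * x) X ++ map (fun x => x * r) X -> g * x = x /\ x * g = x.
  apply: local_unit => x; rewrite mem_cat => /orP [] /mapP [y /hXJ hy ->].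
  - exact: hJl.
  - exact: hJr.
have [e [ee he efix]] := corner_unit hg rr.
exists e; split=> // x hx; split.
  apply: (efix _).1; last by rewrite mulrA rr.
  by apply: (proj1 (gX _ _)); rewrite mem_cat (map_f (fun y => r * y) hx).
apply: (efix _).2; last by rewrite -mulrA rr.
by apply: (proj2 (gX _ _)); rewrite mem_cat (map_f (fun y => y * r) hx) orbT.
Qed.

(* With q := 1 - p, take idempotents eps in p J p and h in q J q that are units for the
   p- and q-components of X; condition (c) replaces eps by some e commuting with T, and
   E := e + h works since p q = q p = 0. *)
Lemma centralizing_unit X : centralizing_idempotents -> (forall x, x \in X -> J x) ->
  exists E, [/\ J E, idem_elt E, forall t, T t -> E * t = t * E &
    forall x, x \in X -> E * x = x /\ x * E = x].
Proof.
move=> hc hXJ; have pp := identity_idem; have [_ hpT] := hp.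
pose q := 1 - p.
have pq : p * q = 0 by rewrite mulrBr mulr1 pp subrr.
have qp : q * p = 0 by rewrite mulrBl mul1r pp subrr.
have qq : idem_elt q by rewrite /idem_elt {1}/q mulrBl mul1r pq subr0.
have [eps [epseps heps epsX]] := corner_fixing_unit pp hXJ.
have [e [ee hpe /(corner_fix ee) [eeps epse] e_comm]] := hc eps epseps heps.
have [h [hh hqh hX]] := corner_fixing_unit qq hXJ.
have [[pe ep] [qh hq]] := (corner_fix pp hpe, corner_fix qq hqh).
have eh0 : e * h = 0 by rewrite -ep -qh mulrA -(mulrA e p q) pq mulr0 mul0r.
have he0 : h * e = 0 by rewrite -hq -pe mulrA -(mulrA h q p) qp mulr0 mul0r.
exists (e + h); split.
- by apply: (subspaceD hJ.1); [exact: ideal_corner hJ hpe|exact: ideal_corner hJ hqh].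
- by rewrite /idem_elt mulrDl !mulrDr ee eh0 he0 hh addr0 add0r.
- move=> t ht; have [pt tp] := hpT t ht.
  have ht0 : h * t = 0 by rewrite -hq -mulrA mulrBl mul1r pt subrr mulr0.
  have th0 : t * h = 0 by rewrite -qh mulrA mulrBr mulr1 tp subrr mul0r.
  by rewrite mulrDl mulrDr e_comm // ht0 th0.
- move=> x hx; have [epsx xeps] := epsX x hx; have [hqx xqh] := hX x hx.
  have pqx : p * x + q * x = x by rewrite -mulrDl addrC subrK mul1r.
  have xpq : x * p + x * q = x by rewrite -mulrDr addrC subrK mulr1.
  split.
    by rewrite mulrDl -ep -hq -!mulrA -epsx mulrA eeps epsx hqx pqx.
  by rewrite mulrDr -pe -qh !mulrA -xeps -mulrA epse xeps xqh xpq.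
Qed.

Lemma direct_sum_seq (s : seq R) : direct_sum_decomp T J ->
  exists X, (forall x, x \in X -> J x) /\
    forall r, r \in s -> exists t j, [/\ T t, j \in X & r = t + j].
Proof.
move=> [hdec _]; elim: s => [|r s [X [hXJ hX]]]; first by exists [::].
have [t [j [ht [hj ->]]]] := hdec r.
exists (j :: X); split=> [x|r']; first by rewrite inE => /orP [/eqP ->|/hXJ].
rewrite inE => /orP [/eqP ->|/hX [t' [j' [ht' hj' ->]]]]; first by exists t, j; rewrite mem_head.
by exists t', j'; rewrite inE hj' orbT.
Qed.

Lemma centralizing_locally_fdss : direct_sum_decomp T J -> centralizing_idempotents ->
  locally_fdss (fun _ : R => True).
Proof.
move=> hdec hc s _; have [hJsub [hJl hJr]] := hJ.
have [X [hXJ hXs]] := direct_sum_seq s hdec.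
have [E [hE EE E_comm EX]] := centralizing_unit hc hXJ.
have /fdssP [hTa /fin_dimP [tb [htb htbspan]] _] := hT.
have [S [hSJ [hS hSL]]] : exists S, subset_of S J /\ fdss S /\
    (forall x, x \in X ++ E :: map (fun t => t * E) tb -> S x).
  apply: hJloc => x; rewrite mem_cat inE => /or3P [/hXJ //|/eqP -> //|/mapP [t _ ->]].
  exact: hJl.
pose A := corner E S.
have hA : fdss A by apply: corner_fdss => //; apply: hSL; rewrite mem_cat mem_head orbT.
have hAsub : subspace A by have /fdssP [/subalgebra_subspace] := hA.
have tE_A t : T t -> A (t * E).
  move=> ht; apply: (in_span_sub (b := map (fun t => t * E) tb)) => //.
    move=> _ /mapP [t' ht' ->]; apply: cornerW => //.
    - by apply: hSL; rewrite mem_cat inE (map_f (fun y => y * E) ht') !orbT.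
    - by rewrite mulrA E_comm; [rewrite -mulrA EE|apply: htb].
    - by rewrite -mulrA EE.
  by apply: in_span_map (htbspan t ht) => [u v|k u]; rewrite ?mulrDl -?scalerAl.
exists (sum_set T A); split; [by []|split].
- apply: (sum_set_fdss hJ hdec.2) => // [a [z [hz ->]]|t a ht ha]; first by apply/hJr/hJl/hSJ.
  have [Ea aE] := corner_fix EE ha; have /fdssP [hAa _ _] := hA.
  split; first by rewrite -Ea mulrA; apply: subalgebraM => //; apply: tE_A.
  by rewrite -aE -mulrA E_comm //; apply: subalgebraM => //; apply: tE_A.
- move=> r hr; have [t [j [ht hj ->]]] := hXs r hr; exists t, j; split=> //.
  have [Ej jE] := EX j hj; apply: cornerW => //.
  by apply: hSL; rewrite mem_cat hj.
Qed.

End Corollary.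

Theorem corollary4p3 (K : fieldType) (R : algType K)
  (J T : R -> Prop) (p : R) :
  ideal J -> locally_fdss J ->
  fdss T -> is_identity_of T p ->
  direct_sum_decomp T J ->
  [/\ (locally_fdss (fun _ : R => True) <-> locally_fdss (corner p (fun _ : R => True))),
      (locally_fdss (corner p (fun _ : R => True)) <->
         (forall f : R, idem_elt f -> corner p J f ->
            exists e : R, [/\ idem_elt e, corner p J e, corner e J f &
                             forall t, T t -> e * t = t * e]))
    & (locally_fdss (fun _ : R => True) <->
         (forall f : R, idem_elt f -> corner p J f ->
            exists e : R, [/\ idem_elt e, corner p J e, corner e J f &
                             forall t, T t -> e * t = t * e]))].
Proof.
move=> hJ hJloc hT hp hdec.
have a_b : locally_fdss (fun _ : R => True) -> locally_fdss (corner p (fun _ : R => True)).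
  by apply: locally_fdss_corner => //; exact: identity_idem hp.
have b_c := corner_locally_fdss_centralizing hJ hT hp.
have c_a := centralizing_locally_fdss hJ hJloc hT hp hdec.
split; split=> h.
- exact: a_b.
- exact: c_a (b_c h).
- exact: b_c.
- exact: a_b (c_a h).
- exact: b_c (a_b h).
- exact: c_a.
Qed.
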